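(* Let $\alpha,\beta\in(0,1/2)$ and $\epsilon\in(0,1/2)$. There exists a constant $c>0$ depending only on $\alpha,\beta,\epsilon$ such that the following holds for all positive integers $n$ and $N$. Suppose there exists a test which, given two independent samples $X^1$ and $X^2$, each of $N$ i.i.d. observations from unknown distributions $p\in\Delta_n$ and $q\in\Delta_n$ on $\Omega=\{1,\dots,n\}$ respectively, outputs $H_0$ or $H_1$, such that (1) for every distribution $p$, when $q=p$ the probability of outputting $H_1$ is at most $\alpha$; and (2) for all $p,q\in\Delta_n$ with $\|p-q\|_2\ge\epsilon\|p\|_2$, the probability of outputting $H_0$ is at most $\beta$. Then $N\ge c\sqrt n$.
   Context: $\Delta_n=\{r\in\mathbb{R}^n:r\ge0,\sum_ir_i=1\}$ is the set of probability distributions on $\{1,\dots,n\}$. *)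

From mathcomp Require Import all_boot all_order all_algebra.
From mathcomp Require Import reals.
Set Implicit Arguments. Unset Strict Implicit. Unset Printing Implicit Defensive.
Import Order.TTheory GRing.Theory Num.Theory.
Local Open Scope ring_scope.

(* Probability simplex Delta_n on Omega = 'I_n = {0,..,n-1} (~ {1..n}). *)
Definition is_distr (R : realType) (n : nat) (p : 'I_n -> R) : Prop :=
  (forall i, 0 <= p i) /\ \sum_(i < n) p i = 1.

Definition l2norm (R : realType) (n : nat) (p : 'I_n -> R) : R :=
  Num.sqrt (\sum_(i < n) p i ^+ 2).

Definition sample (N n : nat) := {ffun 'I_N -> 'I_n}.

Definition sample_prob (R : realType) (N n : nat) (p : 'I_n -> R)
  (x : sample N n) : R := \prod_(k < N) p (x k).

(* A (possibly randomized) test: phi x1 x2 in [0,1] is the probability of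
   outputting H1 on samples x1, x2.  Deterministic tests are the {0,1}-valued ones. *)
Definition is_test (R : realType) (N n : nat)
  (phi : sample N n -> sample N n -> R) : Prop :=
  forall x1 x2, 0 <= phi x1 x2 <= 1.

Definition prob_H1 (R : realType) (N n : nat)
  (phi : sample N n -> sample N n -> R) (p q : 'I_n -> R) : R :=
  \sum_(x1 : sample N n) \sum_(x2 : sample N n)
     sample_prob p x1 * sample_prob q x2 * phi x1 x2.

From mathcomp Require Import all_boot all_order all_algebra.
From mathcomp Require Import reals.
From mathcomp Require Import ring lra zify.
Import Order.TTheory GRing.Theory Num.Theory.
Local Open Scope ring_scope.

Set Implicit Arguments. Unset Strict Implicit. Unset Printing Implicit Defensive.

(* Le Cam's method with a mixture of alternatives.  Group the points
   j < 2m <= n into the m pairs {i, i + m}; let p be uniform on these 2m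
   points and, for s : 'I_m -> bool, let q_s be uniform on the m points that
   s selects, one from each pair.  Then |p - q_s|_2 = |p|_2.  Unless two of
   the N draws fall into the same pair on opposite sides, the average over s
   of q_s^N dominates p^N, so the two error bounds of the test force
   1 - alpha - beta to be at most the probability of such a split pair, which
   a union bound over the N^2 pairs of draws puts below N^2 / (2m).  Taking
   m = n/2 gives N^2 >= (1 - alpha - beta) n / 3. *)

Lemma indicator_exists_le_sum (R : numDomainType) (T : finType) (P : pred T) :
  ([exists a, P a]%:R : R) <= \sum_a (P a)%:R.
Proof.
case: existsP => [[a Pa]|_]; last by apply: sumr_ge0 => a _; rewrite ler0n.
by rewrite (bigD1 a) //= Pa lerDl sumr_ge0 // => b _; rewrite ler0n.
Qed.

Lemma sum_indicator_mul (R : pzSemiRingType) (T : finType) (t0 : T) (a : T -> R) :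
  \sum_t (t == t0)%:R * a t = a t0.
Proof.
by rewrite (bigD1 t0) //= eqxx mul1r big1 ?addr0 // => t /negbTE ->; rewrite mul0r.
Qed.

Lemma sqrtrM_le (R : rcfType) (c x y : R) :
  0 <= c -> 0 <= y -> c * x <= y ^+ 2 -> Num.sqrt c * Num.sqrt x <= y.
Proof.
move=> c_ge0 y_ge0 cx_le; rewrite -sqrtrM // -[y]ger0_norm // -sqrtr_sqr.
exact: ler_wsqrtr.
Qed.

Section Sampling.
Variables (R : realType) (N n : nat).
Implicit Types (p : 'I_n -> R) (x : sample N n).

Lemma sample_prob_ge0 p x : (forall i, 0 <= p i) -> 0 <= sample_prob p x.
Proof. by move=> p_ge0; apply: prodr_ge0. Qed.

Lemma sum_sample_prob p : \sum_(x : sample N n) sample_prob p x = (\sum_(i < n) p i) ^+ N.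
Proof. by rewrite -[N in RHS]card_ord -prodr_const bigA_distr_bigA. Qed.

Lemma sum_sample_prob_distr p : is_distr p -> \sum_(x : sample N n) sample_prob p x = 1.
Proof. by case=> _ p1; rewrite sum_sample_prob p1 expr1n. Qed.

Lemma sample_prob_pair_marginal p (k l : 'I_N) (j j' : 'I_n) : k != l ->
  \sum_(i < n) p i = 1 ->
  \sum_(x : sample N n) sample_prob p x * (x k == j)%:R * (x l == j')%:R = p j * p j'.
Proof.
move=> kl p1.
pose G t i : R := p i * (if t == k then (i == j)%:R else 1)
                      * (if t == l then (i == j')%:R else 1).
have prod_at t0 (a : 'I_N -> R) : \prod_t (if t == t0 then a t else 1) = a t0.
  by rewrite -big_mkcond big_pred1_eq.
transitivity (\sum_(x : sample N n) \prod_t G t (x t)).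
  apply: eq_bigr => x _; rewrite !big_split /= (prod_at k (fun t => (x t == j)%:R)).
  by rewrite (prod_at l (fun t => (x t == j')%:R)).
rewrite -bigA_distr_bigA /= -(prod_at k (fun _ => p j)) -(prod_at l (fun _ => p j')).
rewrite -big_split /=; apply: eq_bigr => t _; rewrite /G.
case: (eqVneq t k) => [->|tk].
  rewrite (negbTE kl) mulr1; under eq_bigr do rewrite mulr1 mulrC.
  exact: sum_indicator_mul.
case: (eqVneq t l) => [_|tl]; under eq_bigr do rewrite mulr1.
  by rewrite mul1r; under eq_bigr do rewrite mulrC; rewrite sum_indicator_mul.
by rewrite mulr1; under eq_bigr do rewrite mulr1.
Qed.

Lemma sample_prob_pair_expectation p (F : 'I_n -> 'I_n -> R) (k l : 'I_N) : k != l ->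
  \sum_(i < n) p i = 1 ->
  \sum_(x : sample N n) sample_prob p x * F (x k) (x l)
  = \sum_(j < n) \sum_(j' < n) p j * p j' * F j j'.
Proof.
move=> kl p1.
have F_coord x : F (x k) (x l)
    = \sum_(j < n) \sum_(j' < n) (x k == j)%:R * (x l == j')%:R * F j j'.
  rewrite -(sum_indicator_mul (x k) (fun j => F j (x l))); apply: eq_bigr => j _.
  rewrite -(sum_indicator_mul (x l) (F j)) mulr_sumr; apply: eq_bigr => j' _.
  by rewrite eq_sym [(x l == _)]eq_sym mulrA.
under eq_bigr do rewrite F_coord mulr_sumr; rewrite exchange_big.
apply: eq_bigr => j _; under eq_bigr do rewrite mulr_sumr; rewrite exchange_big.
apply: eq_bigr => j' _; rewrite -(sample_prob_pair_marginal _ _ kl p1) mulr_suml.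
by apply: eq_bigr => x _; rewrite !mulrA.
Qed.

Lemma sample_collision_le (C : rel 'I_n) p (d : R) : is_distr p -> irreflexive C ->
  (forall j, \sum_(j' < n) p j' * (C j j')%:R <= d) ->
  \sum_(x : sample N n) sample_prob p x * [exists k, exists l, C (x k) (x l)]%:R
  <= N%:R ^+ 2 * d.
Proof.
move=> [p_ge0 p1] C_irr C_le.
have d_ge0 : 0 <= d.
  case: (pickP 'I_n) => [j _|no_j]; last first.
    by move: p1; rewrite big1 => [/esym/eqP|i]; [rewrite oner_eq0 | have := no_j i].
  by apply: le_trans (C_le j); apply: sumr_ge0 => j' _; rewrite mulr_ge0.
apply: (@le_trans _ _ (\sum_(x : sample N n) sample_prob p x *
    \sum_(k < N) \sum_(l < N) (C (x k) (x l))%:R)).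
  apply: ler_sum => x _; apply: ler_wpM2l; first exact: sample_prob_ge0.
  apply: le_trans (indicator_exists_le_sum _ _) _.
  by apply: ler_sum => k _; apply: indicator_exists_le_sum.
under eq_bigr do rewrite mulr_sumr; rewrite exchange_big /=.
apply: (@le_trans _ _ (\sum_(k < N) \sum_(l < N) d)); last first.
  by rewrite !sumr_const !card_ord -mulrnA -[d *+ _]mulr_natl natrM -expr2.
apply: ler_sum => k _; under eq_bigr do rewrite mulr_sumr; rewrite exchange_big /=.
apply: ler_sum => l _; have [<-|kl] := eqVneq k l.
  by rewrite big1 // => x _; rewrite C_irr mulr0.
rewrite (sample_prob_pair_expectation (fun j j' => (C j j')%:R) kl p1).
apply: (@le_trans _ _ (\sum_(j < n) p j * d)); last by rewrite -mulr_suml p1 mul1r.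
apply: ler_sum => j _; under eq_bigr do rewrite -mulrA.
by rewrite -mulr_sumr ler_wpM2l.
Qed.

End Sampling.

Section MixtureBound.
Variables (R : realType) (N n : nat) (phi : sample N n -> sample N n -> R).
Hypothesis phi_test : is_test phi.

Definition prob_H1_given (p : 'I_n -> R) (x2 : sample N n) : R :=
  \sum_(x1 : sample N n) sample_prob p x1 * phi x1 x2.

Lemma prob_H1E p q :
  prob_H1 phi p q = \sum_(x2 : sample N n) sample_prob q x2 * prob_H1_given p x2.
Proof.
rewrite /prob_H1 exchange_big; apply: eq_bigr => x2 _.
by rewrite mulr_sumr; apply: eq_bigr => x1 _; rewrite mulrCA mulrA.
Qed.

Lemma prob_H1_given_in01 p x2 : is_distr p -> 0 <= prob_H1_given p x2 <= 1.
Proof.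
move=> p_distr; have [p_ge0 _] := p_distr.
rewrite -(sum_sample_prob_distr N p_distr); apply/andP; split.
  by apply: sumr_ge0 => x1 _; rewrite mulr_ge0 ?sample_prob_ge0 //; case/andP: (phi_test x1 x2).
apply: ler_sum => x1 _; rewrite ler_piMr ?sample_prob_ge0 //.
by case/andP: (phi_test x1 x2).
Qed.

Lemma mixture_lower_bound (S : finType) (p : 'I_n -> R) (q : S -> 'I_n -> R)
    (B : pred (sample N n)) (alpha beta : R) :
  (0 < #|S|)%N -> is_distr p -> (forall s, is_distr (q s)) ->
  (forall x, ~~ B x -> #|S|%:R * sample_prob p x <= \sum_s sample_prob (q s) x) ->
  prob_H1 phi p p <= alpha -> (forall s, 1 - prob_H1 phi p (q s) <= beta) ->
  1 - alpha - beta <= \sum_(x : sample N n) sample_prob p x * (B x)%:R.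
Proof.
move=> S_gt0 p_distr q_distr p_le_mix alpha_ok beta_ok.
have [p_ge0 _] := p_distr.
pose accept x := 1 - prob_H1_given p x.
have accept01 x : 0 <= accept x <= 1.
  have /andP[h0 h1] := prob_H1_given_in01 x p_distr.
  by rewrite /accept; apply/andP; split; lra.
have accept_p : 1 - alpha <= \sum_(x : sample N n) sample_prob p x * accept x.
  under eq_bigr do rewrite mulrBr mulr1.
  by rewrite sumrB sum_sample_prob_distr // -prob_H1E; lra.
have accept_q s : \sum_(x : sample N n) sample_prob (q s) x * accept x <= beta.
  under eq_bigr do rewrite mulrBr mulr1.
  by rewrite sumrB sum_sample_prob_distr // -prob_H1E; apply: beta_ok.
have off_B x : #|S|%:R * (sample_prob p x * accept x)
    <= (\sum_s sample_prob (q s) x) * accept x + #|S|%:R * (sample_prob p x * (B x)%:R).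
  have /andP[a0 a1] := accept01 x; have Px0 := sample_prob_ge0 x p_ge0.
  have Q0 : 0 <= \sum_s sample_prob (q s) x.
    by apply: sumr_ge0 => s _; apply: sample_prob_ge0; case: (q_distr s).
  case: (boolP (B x)) => Bx /=.
    by rewrite mulr1 ler_wpDl ?mulr_ge0 // ler_wpM2l ?ler_piMr.
  by rewrite mulr0 mulr0 addr0 mulrA ler_wpM2r // p_le_mix.
have accept_mix : \sum_(x : sample N n) (\sum_s sample_prob (q s) x) * accept x
    <= #|S|%:R * beta.
  under eq_bigr do rewrite mulr_suml; rewrite exchange_big /=.
  by rewrite mulr_natl -sumr_const; apply: ler_sum => s _; apply: accept_q.
have sum_off_B : #|S|%:R * \sum_(x : sample N n) sample_prob p x * accept x
    <= \sum_(x : sample N n) (\sum_s sample_prob (q s) x) * accept x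
       + #|S|%:R * \sum_(x : sample N n) sample_prob p x * (B x)%:R.
  by rewrite !mulr_sumr -big_split; apply: ler_sum => x _; apply: off_B.
have S_pos : 0 < #|S|%:R :> R by rewrite ltr0n.
nra.
Qed.

End MixtureBound.

Lemma consistent_assignments_lb (I K : finType) (a : K -> I) (b : K -> bool) :
  (forall k l, a k = a l -> b k = b l) ->
  (2 ^ #|I| <= 2 ^ #|K| * \sum_(s : {ffun I -> bool}) \prod_(k : K) (s (a k) == b k))%N.
Proof.
move=> a_consistent.
set A := [set a k | k in K].
have -> : (\sum_(s : {ffun I -> bool}) \prod_(k : K) (s (a k) == b k)
    = \prod_(i : I) \sum_(c : bool) \prod_(k | a k == i) (c == b k))%N.
  rewrite bigA_distr_bigA; apply: eq_bigr => s _.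
  rewrite (partition_big a predT) //; apply: eq_bigr => i _.
  by apply: eq_bigr => k /eqP <-.
have factor_ge i : ((if i \in A then 1 else 2)
    <= \sum_(c : bool) \prod_(k | a k == i) (c == b k))%N.
  case: imsetP => [[k0 _ ->]|notA].
    rewrite (bigD1 (b k0)) //= big1 ?leq_addr // => k /eqP /a_consistent ->.
    by rewrite eqxx.
  by rewrite big_bool !big1 // => k /eqP ak; case: notA; exists k.
have -> : #|I| = (#|A| + #|~: A|)%N by rewrite cardsC.
rewrite expnD leq_mul // ?leq_pexp2l ?leq_imset_card //.
apply: leq_trans (leq_prod (fun i _ => factor_ge i)).
rewrite -prod_nat_const big_mkcond /=; apply/eq_leq/eq_bigr => i _.
by rewrite in_setC; case: (i \in A).
Qed.

Section PairedSupport.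
Variables (R : realType) (n m : nat).
Hypotheses (m_gt0 : (0 < m)%N) (m2_le_n : (2 * m <= n)%N).

Definition pair_of (j : nat) : 'I_m := Ordinal (ltn_pmod j m_gt0).
Definition upper (j : nat) : bool := (m <= j)%N.

Definition unif_pairs : 'I_n -> R :=
  fun j => if (j < 2 * m)%N then (2 * m)%:R^-1 else 0.

Definition half_pairs (s : {ffun 'I_m -> bool}) : 'I_n -> R :=
  fun j => if (j < 2 * m)%N && (s (pair_of j) == upper j) then m%:R^-1 else 0.

Definition splits_pair (j j' : 'I_n) : bool :=
  (pair_of j == pair_of j') && (upper j != upper j').

Lemma pair_of_upperK (j : nat) : (j < 2 * m)%N -> j = (pair_of j + m * upper j)%N.
Proof.
rewrite /upper /=; case: (leqP m j) => [m_le_j | j_lt_m] j_lt.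
  have -> : (j %% m = j - m)%N by rewrite -{1}(subnK m_le_j) modnDr modn_small //; lia.
  by rewrite muln1 subnK.
by rewrite modn_small // muln0 addn0.
Qed.

Lemma sum_first_pairs (F : nat -> R) :
  \sum_(j < n) (if (j < 2 * m)%N then F j else 0) = \sum_(i < m) (F i + F (i + m)%N).
Proof.
rewrite -(big_mkord xpredT (fun j => if (j < 2 * m)%N then F j else 0)).
rewrite (big_cat_nat (leq0n _) m2_le_n) /= [X in _ + X]big1_seq ?addr0; last first.
  by move=> i /andP[_]; rewrite mem_index_iota => /andP[le_i _]; rewrite ltnNge le_i.
rewrite big_nat_cond (eq_bigr (fun i => F i)) -?big_nat_cond; last first.
  by move=> i /andP[/andP[_ ->]].
rewrite (big_cat_nat (leq0n _) (leq_pmull m (isT : (0 < 2)%N))) /=.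
by rewrite -{2}(add0n m) big_addn mul2n -addnn addnK !big_mkord big_split.
Qed.

Lemma unif_pairs_distr : is_distr unif_pairs.
Proof.
split=> [j|]; first by rewrite /unif_pairs; case: ifP; rewrite ?invr_ge0 ?ler0n.
rewrite /unif_pairs (sum_first_pairs (fun=> (2 * m)%:R^-1)) sumr_const card_ord.
rewrite -mulr2n -mulrnA -[_ *+ (2 * m)]mulr_natr mulVf //.
by rewrite pnatr_eq0 -lt0n muln_gt0.
Qed.

Lemma half_pairs_distr s : is_distr (half_pairs s).
Proof.
split=> [j|]; first by rewrite /half_pairs; case: ifP; rewrite ?invr_ge0 ?ler0n.
pose F i : R := if s (pair_of i) == upper i then m%:R^-1 else 0.
rewrite /half_pairs (eq_bigr (fun j : 'I_n => if (j < 2 * m)%N then F j else 0)); last first.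
  by move=> j _; case: (j < 2 * m)%N.
rewrite sum_first_pairs (eq_bigr (fun=> m%:R^-1)) => [|i _]; rewrite /F.
  by rewrite sumr_const card_ord -[_ *+ m]mulr_natr mulVf // pnatr_eq0 -lt0n.
have -> : pair_of (i + m) = pair_of i by apply: val_inj; rewrite /= modnDr.
rewrite /upper leq_addl leqNgt ltn_ord /=.
by case: (s (pair_of i)); rewrite ?addr0 ?add0r.
Qed.

Lemma l2norm_unif_sub_half s :
  l2norm (fun j => unif_pairs j - half_pairs s j) = l2norm unif_pairs.
Proof.
congr Num.sqrt; apply: eq_bigr => j _; rewrite /unif_pairs /half_pairs.
case: (j < 2 * m)%N; last by rewrite subr0.
case: (_ == _); last by rewrite subr0.
have m_neq0 : m%:R != 0 :> R by rewrite pnatr_eq0 -lt0n.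
have -> : (2 * m)%:R^-1 - m%:R^-1 = - (2 * m)%:R^-1 :> R.
  by rewrite natrM; field.
by rewrite sqrrN.
Qed.

Lemma splits_pair_irr : irreflexive splits_pair.
Proof. by move=> j; rewrite /splits_pair !eqxx. Qed.

Lemma unif_splits_pair_le (j : 'I_n) :
  \sum_(j' < n) unif_pairs j' * (splits_pair j j')%:R <= (2 * m)%:R^-1.
Proof.
have partner_lt : (pair_of j + m * ~~ upper j < n)%N.
  by have := ltn_ord (pair_of j); case: (~~ upper j); lia.
rewrite -(sum_indicator_mul (Ordinal partner_lt) (fun=> (2 * m)%:R^-1)).
apply: ler_sum => j' _; rewrite /unif_pairs.
have c_ge0 : 0 <= (2 * m)%:R^-1 :> R by rewrite invr_ge0 ler0n.
case: (boolP (splits_pair j j')) => [/andP[/eqP same_pair /negPf flip]|_].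
  case: ifP => [j'_lt|_]; last by rewrite mul0r mulr_ge0 ?ler0n.
  suff -> : j' == Ordinal partner_lt by rewrite mulr1 mul1r.
  apply/eqP/val_inj; rewrite /= (pair_of_upperK j'_lt) -same_pair.
  by move: flip; case: (upper j); case: (upper j').
by rewrite mulr0 mulr_ge0 ?ler0n.
Qed.

Lemma unif_le_mix N (x : sample N n) :
  ~~ [exists k, exists l, splits_pair (x k) (x l)] ->
  #|{ffun 'I_m -> bool}|%:R * sample_prob unif_pairs x
  <= \sum_(s : {ffun 'I_m -> bool}) sample_prob (half_pairs s) x.
Proof.
move=> no_split.
have mix_ge0 : 0 <= \sum_(s : {ffun 'I_m -> bool}) sample_prob (half_pairs s) x.
  by apply: sumr_ge0 => s _; apply: sample_prob_ge0; case: (half_pairs_distr s).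
case: (boolP [forall k, x k < 2 * m]%N) => [/forallP x_supp | /forallPn[k x_out]]; last first.
  by rewrite /sample_prob (bigD1 k) //= /unif_pairs (negbTE x_out) mul0r mulr0.
have unif_x : sample_prob unif_pairs x = (2 * m)%:R^-1 ^+ N.
  rewrite /sample_prob (eq_bigr (fun=> (2 * m)%:R^-1)) ?prodr_const ?card_ord //.
  by move=> k _; rewrite /unif_pairs x_supp.
have half_x s : sample_prob (half_pairs s) x
    = m%:R^-1 ^+ N * \prod_k (s (pair_of (x k)) == upper (x k))%:R.
  rewrite /sample_prob -[N in _ ^+ N]card_ord -prodr_const -big_split /=.
  apply: eq_bigr => k _; rewrite /half_pairs x_supp.
  by case: (_ == _); rewrite ?mulr1 ?mulr0.
have consistent k l : pair_of (x k) = pair_of (x l) -> upper (x k) = upper (x l).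
  move=> same; case: (eqVneq (upper (x k)) (upper (x l))) => // flip.
  case/negP: no_split.
  by apply/existsP; exists k; apply/existsP; exists l; rewrite /splits_pair same eqxx.
have := consistent_assignments_lb consistent; rewrite !card_ord -(ler_nat R).
rewrite natrM !natrX natr_sum; under eq_bigr do rewrite natr_prod.
set count := \sum_s _ => count_lb.
rewrite unif_x; under eq_bigr do rewrite half_x.
rewrite -mulr_sumr -/count card_ffun card_bool card_ord natrX natrM invfM exprMn mulrA.
rewrite [X in X <= _]mulrC ler_wpM2l ?exprn_ge0 ?invr_ge0 ?ler0n //.
by rewrite exprVn ler_pdivrMr ?exprn_gt0 ?ltr0n // mulrC.
Qed.

Lemma paired_sample_size_lb N (phi : sample N n -> sample N n -> R) (alpha beta : R) :
  is_test phi -> prob_H1 phi unif_pairs unif_pairs <= alpha ->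
  (forall s, 1 - prob_H1 phi unif_pairs (half_pairs s) <= beta) ->
  (1 - alpha - beta) * (2 * m)%:R <= N%:R ^+ 2.
Proof.
move=> phi_test alpha_ok beta_ok.
have := mixture_lower_bound phi_test _ unif_pairs_distr half_pairs_distr
  (@unif_le_mix N) alpha_ok beta_ok.
rewrite card_ffun card_bool expn_gt0 => /(_ isT) err_le.
have := sample_collision_le N unif_pairs_distr splits_pair_irr unif_splits_pair_le.
by move=> /(le_trans err_le); rewrite -ler_pdivlMr ?ltr0n ?muln_gt0.
Qed.

End PairedSupport.

Unset Implicit Arguments. Set Strict Implicit.

Theorem proposition3 (R : realType) (alpha beta eps : R) :
  0 < alpha < 1/2 -> 0 < beta < 1/2 -> 0 < eps < 1/2 ->
  exists c : R, 0 < c /\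
    forall (n N : nat), (0 < n)%N -> (0 < N)%N ->
    forall phi : sample N n -> sample N n -> R,
      is_test phi ->
      (forall p : 'I_n -> R, is_distr p -> prob_H1 phi p p <= alpha) ->
      (forall p q : 'I_n -> R, is_distr p -> is_distr q ->
         l2norm (fun i => p i - q i) >= eps * l2norm p ->
         1 - prob_H1 phi p q <= beta) ->
      N%:R >= c * Num.sqrt (n%:R).
Proof.
move=> /andP[alpha_gt0 alpha_lt] /andP[beta_gt0 beta_lt] /andP[eps_gt0 eps_lt].
pose g := (1 - alpha - beta) / 3.
have g_gt0 : 0 < g by rewrite /g; lra.
exists (Num.sqrt g); split; first by rewrite sqrtr_gt0.
move=> n N n_gt0 N_gt0 phi phi_test level_ok power_ok.
apply: sqrtrM_le; rewrite ?(ltW g_gt0) ?ler0n //.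
have [n_le1 | n_ge2] := leqP n 1.
  have -> : n = 1%N by lia.
  have N_ge1 : 1 <= N%:R :> R by rewrite ler1n.
  by rewrite mulr1 /g; nra.
have m_gt0 : (0 < n %/ 2)%N by rewrite divn_gt0.
have m2_le_n : (2 * (n %/ 2) <= n)%N by rewrite mulnC leq_trunc_div.
have n_le_3m : n%:R <= 3 * (2 * (n %/ 2))%:R :> R by rewrite -natrM ler_nat; lia.
have unif_distr := unif_pairs_distr R m_gt0 m2_le_n.
have half_distr := half_pairs_distr R m_gt0 m2_le_n.
have unif_far_half s : eps * l2norm (unif_pairs R (n %/ 2) : 'I_n -> R)
    <= l2norm (fun i : 'I_n => unif_pairs R (n %/ 2) i - half_pairs R m_gt0 s i).
  rewrite l2norm_unif_sub_half; apply: ler_piMl; [exact: sqrtr_ge0 | lra].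
apply: le_trans (paired_sample_size_lb m2_le_n phi_test (level_ok _ unif_distr)
  (fun s => power_ok _ _ unif_distr (half_distr s) (unif_far_half s))).
rewrite /g; nra.
Qed.
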